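(* With notation as in the context (type $E_6$ over $\mathbb{Z}/3$), $\Gamma_6^+=\{(x_1,\dots,x_5)\in V: \prod_{i=1}^5x_i=1\}$, i.e. $\Gamma_6^+$ is the set of vectors with all coordinates nonzero and an even number of coordinates equal to $2$.
   Context: Let $V=(\mathbb{Z}/3)^5$ with the standard symmetric form $\sum_i x_iy_i$. Let $\Delta$ be the root system of type $E_6$ with simple roots $\alpha_1,\dots,\alpha_6$, $\langle\alpha_i,\alpha_i\rangle=2$, $\langle\alpha_i,\alpha_j\rangle=-1$ if $\{i,j\}\in\{\{1,3\},\{3,4\},\{4,5\},\{5,6\},\{2,4\}\}$, $0$ otherwise; $\Lambda=\bigoplus\mathbb{Z}\alpha_i$. Let $f:\Lambda\to V$ be the group homomorphism with $f(\alpha_1)=(1,2,0,0,0)$, $f(\alpha_2)=(0,0,0,1,2)$, $f(\alpha_3)=(0,1,2,0,0)$, $f(\alpha_4)=(0,0,1,2,0)$, $f(\alpha_5)=(0,0,0,1,1)$, $f(\alpha_6)=(1,1,1,1,1)$. Let $\Delta_6^+$ be the positive roots $\beta=\sum\beta^i\alpha_i$ with $\beta^6\ne0$, and $\Gamma_6^+=f(\Delta_6^+)$. *)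

From HB Require Import structures.
From mathcomp Require Import all_boot all_order all_algebra.
Set Implicit Arguments. Unset Strict Implicit. Unset Printing Implicit Defensive.
Import GRing.Theory.
Local Open Scope ring_scope.

Definition V := {ffun 'I_5 -> 'F_3}.

(* The root lattice Lambda = (+)_i Z alpha_i, elements are coefficient
   vectors beta = sum_i beta^i alpha_i, indices 0..5 standing for 1..6. *)
Definition Lam := {ffun 'I_6 -> int}.

(* Bilinear form on simple roots (Cartan matrix of E6, Bourbaki labelling):
   edges {1,3},{3,4},{4,5},{5,6},{2,4} (1-based) *)
Definition adjE6 (i j : nat) : bool :=
  [|| (i, j) == (0, 2), (i, j) == (2, 0), (i, j) == (2, 3), (i, j) == (3, 2),
      (i, j) == (3, 4), (i, j) == (4, 3), (i, j) == (4, 5), (i, j) == (5, 4),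
      (i, j) == (1, 3) | (i, j) == (3, 1)]%N.

Definition formE6 (i j : 'I_6) : int :=
  if i == j then 2 else if adjE6 i j then -1 else 0.

Definition pairing (b c : Lam) : int :=
  \sum_(i < 6) \sum_(j < 6) b i * c j * formE6 i j.

Definition alpha (i : 'I_6) : Lam := [ffun j => (i == j)%:R].

Definition refl (i : 'I_6) (b : Lam) : Lam :=
  [ffun j => b j - pairing b (alpha i) * alpha i j].

Inductive is_root : Lam -> Prop :=
| root_simple i : is_root (alpha i)
| root_refl i b : is_root b -> is_root (refl i b).

Definition positive (b : Lam) : bool := [forall i, 0 <= b i].

Definition fvec (a0 a1 a2 a3 a4 : 'F_3) : V :=
  [ffun k : 'I_5 => nth 0 [:: a0; a1; a2; a3; a4] k].

Definition f_alpha (i : 'I_6) : V :=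
  match val i with
  | 0 => fvec 1 2 0 0 0
  | 1 => fvec 0 0 0 1 2
  | 2 => fvec 0 1 2 0 0
  | 3 => fvec 0 0 1 2 0
  | 4 => fvec 0 0 0 1 1
  | _ => fvec 1 1 1 1 1
  end%R.

Definition f (b : Lam) : V := \sum_(i < 6) f_alpha i *~ b i.

Definition Gamma6plus (x : V) : Prop :=
  exists b : Lam, [/\ is_root b, positive b, b ord_max != 0 & f b = x].

(* The map f is, modulo 3, the Euclidean model of E6: it sends a1, ..., a5 to
   the simple roots e1-e2, e4-e5, e2-e3, e3-e4, e4+e5 of D5 and a6 to
   (1,...,1).  Writing z(b) in Z^5 for the D5 coordinates of the first five
   terms of b, one has f(b)_k = z_k + b^6 (mod 3) and
     4 <b,b> = sum_k (2 z_k - b^6)^2 + 3 (b^6)^2,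
   so the form is positive definite.  The positive roots are then exactly the
   nonnegative vectors of norm 2: descend in height by subtracting a simple
   root a_i with <b,a_i> = 1.  For such a b with b^6 > 0 the identity forces
   b^6 = 1 and z in {0,1}^5, and sum_k z_k = 2 b^5 is even, so f(b) lies in
   {1,2}^5 with an even number of entries 2 = -1; conversely every such
   z lifts to a positive root.  In F_3 these are exactly the vectors with
   product 1. *)

From mathcomp Require Import all_boot all_order all_algebra ring zify.
Import Order.TTheory GRing.Theory Num.Theory.
Local Open Scope ring_scope.

Lemma F3_cases (a : 'F_3) : [\/ a = 0, a = 1 | a = 2].
Proof.
by case: a => [[|[|[|//]]] ?]; [apply: Or31 | apply: Or32 | apply: Or33];
  apply: val_inj.
Qed.

Lemma F3_unit_sign (a : 'F_3) : a != 0 -> a = if a == 2 then -1 else 1.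
Proof. by case: (F3_cases a) => [->|->|->] // _; apply/eqP. Qed.

Lemma prod_F3_eq1 (I : finType) (x : I -> 'F_3) :
  \prod_i x i = 1 <-> (forall i, x i != 0) /\ ~~ odd #|[set i | x i == 2]|.
Proof.
have [nz|/forallPn[i /negPn/eqP xi0]] := boolP [forall i, x i != 0]; last first.
  by rewrite (bigD1 i) //= xi0 mul0r; split=> [|[/(_ i)]]; rewrite ?xi0 ?eqxx.
have {}nz i : x i != 0 by exact: (forallP nz).
rewrite (eq_bigr _ (fun i _ => F3_unit_sign _ (nz i))) -big_mkcond prodr_const.
rewrite -signr_odd cardsE.
by case: odd; split => // [[]].
Qed.

Lemma adjE6C (i j : nat) : adjE6 i j = adjE6 j i.
Proof. by case: i => [|[|[|[|[|[|i]]]]]]; case: j => [|[|[|[|[|[|j]]]]]]. Qed.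

Lemma formE6C (i j : 'I_6) : formE6 i j = formE6 j i.
Proof. by rewrite /formE6 eq_sym adjE6C. Qed.

Lemma pairingC (b c : Lam) : pairing b c = pairing c b.
Proof.
rewrite /pairing exchange_big; apply: eq_bigr => i _; apply: eq_bigr => j _.
by rewrite formE6C [b j * _]mulrC.
Qed.

Lemma pairingBl (b b' c : Lam) :
  pairing (b - b') c = pairing b c - pairing b' c.
Proof.
rewrite /pairing -sumrB; apply: eq_bigr => i _; rewrite -sumrB.
by apply: eq_bigr => j _; rewrite !ffunE !mulrBl.
Qed.

Lemma pairingMzl (b c : Lam) (n : int) : pairing (b *~ n) c = pairing b c * n.
Proof.
rewrite /pairing mulr_suml; apply: eq_bigr => i _; rewrite mulr_suml.
apply: eq_bigr => j _; rewrite ffunMzE mulrzz; ring.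
Qed.

Lemma pairingBr (b b' c : Lam) :
  pairing c (b - b') = pairing c b - pairing c b'.
Proof. by rewrite !(pairingC c) pairingBl. Qed.

Lemma pairingMzr (b c : Lam) (n : int) : pairing c (b *~ n) = pairing c b * n.
Proof. by rewrite !(pairingC c) pairingMzl. Qed.

Lemma pairing_alphal (i : 'I_6) (c : Lam) :
  pairing (alpha i) c = \sum_j c j * formE6 i j.
Proof.
rewrite /pairing (bigD1 i) //= [X in _ + X]big1 => [|k /negbTE ki]; last first.
  by apply: big1 => j _; rewrite ffunE eq_sym ki !mul0r.
by rewrite addr0; apply: eq_bigr => j _; rewrite ffunE eqxx mul1r.
Qed.

Lemma pairing_alpha_alpha (i : 'I_6) : pairing (alpha i) (alpha i) = 2.
Proof.
rewrite pairing_alphal (bigD1 i) //= [X in _ + X]big1 => [|j /negbTE ij].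
  by rewrite ffunE eqxx mul1r addr0 /formE6 eqxx.
by rewrite ffunE eq_sym ij mul0r.
Qed.

Lemma pairing_expandl (b c : Lam) :
  pairing b c = \sum_i b i * pairing (alpha i) c.
Proof.
apply: eq_bigr => i _; rewrite pairing_alphal mulr_sumr.
by apply: eq_bigr => j _; rewrite mulrA.
Qed.

Lemma pairing_sub_scaled (b a : Lam) (n : int) :
  pairing (b - a *~ n) (b - a *~ n)
  = pairing b b - 2 * n * pairing b a + n ^+ 2 * pairing a a.
Proof.
rewrite !(pairingBl, pairingBr) !(pairingMzl, pairingMzr) (pairingC a b); ring.
Qed.

Lemma reflE (i : 'I_6) (b : Lam) :
  refl i b = b - alpha i *~ pairing b (alpha i).
Proof. by apply/ffunP => j; rewrite !ffunE ffunMzE ffunE mulrzz mulrC. Qed.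

Lemma pairing_refl (i : 'I_6) (b : Lam) :
  pairing (refl i b) (refl i b) = pairing b b.
Proof. by rewrite reflE pairing_sub_scaled pairing_alpha_alpha; ring. Qed.

Lemma root_norm (b : Lam) : is_root b -> pairing b b = 2.
Proof. by elim=> [i|i {}b _ nb2]; rewrite ?pairing_alpha_alpha ?pairing_refl. Qed.

(* [simpl never] keeps [at_nat b k] an atom for [ring] and [lia] once a sum
   over 'I_6 has been unrolled. *)
Definition at_nat (n : nat) (T : Type) (F : {ffun 'I_n.+1 -> T}) (k : nat)
  : T :=
  F (inord k).
Arguments at_nat {n T} F k : simpl never.

Lemma at_natE {n : nat} {T : Type} (F : {ffun 'I_n.+1 -> T}) (i : 'I_n.+1) :
  F i = at_nat F i.
Proof. by rewrite /at_nat inord_val. Qed.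

(* z = b1 (e1-e2) + b3 (e2-e3) + b4 (e3-e4) + b2 (e4-e5) + b5 (e4+e5), with
   the coefficient b_i stored at index i - 1. *)
Definition d5 (b : Lam) (k : 'I_5) : int :=
  match nat_of_ord k with
  | 0 => at_nat b 0
  | 1 => at_nat b 2 - at_nat b 0
  | 2 => at_nat b 3 - at_nat b 2
  | 3 => at_nat b 1 + at_nat b 4 - at_nat b 3
  | _ => at_nat b 4 - at_nat b 1
  end.

Lemma pairing_sum_squares (b : Lam) :
  4 * pairing b b = \sum_k (2 * d5 b k - at_nat b 5) ^+ 2 + 3 * at_nat b 5 ^+ 2.
Proof.
rewrite /pairing !big_ord_recr !big_ord0 /= !(at_natE b) /= /formE6 /= /d5 /=.
ring.
Qed.

Lemma pairing_ge0 (b : Lam) : 0 <= pairing b b.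
Proof.
rewrite -(pmulr_rge0 _ (isT : (0 : int) < 4)) pairing_sum_squares.
rewrite addr_ge0 ?sumr_ge0 // => [k _|]; first exact: sqr_ge0.
exact: mulr_ge0 _ (sqr_ge0 _).
Qed.

Lemma pairing_eq0 (b : Lam) : pairing b b = 0 -> b = 0.
Proof.
move=> Q0; have /esym/eqP := pairing_sum_squares b.
have sum_ge0 : 0 <= \sum_k (2 * d5 b k - at_nat b 5) ^+ 2.
  by apply: sumr_ge0 => k _; exact: sqr_ge0.
rewrite Q0 mulr0 (paddr_eq0 sum_ge0 (mulr_ge0 (ler0n _ 3) (sqr_ge0 _))).
move=> /andP[/eqP sq0].
rewrite mulf_eq0 sqrf_eq0 /= => /eqP t0.
have z0 k : d5 b k = 0.
  move/eqP: (@psumr_eq0P _ _ _ _ (fun k _ => sqr_ge0 _) sq0 k isT).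
  by rewrite sqrf_eq0 t0 subr0 mulf_eq0 /= => /eqP.
have := z0 (inord 0); have := z0 (inord 1); have := z0 (inord 2).
have := z0 (inord 3); have := z0 (inord 4); rewrite /d5 !inordK //= => *.
apply/ffunP => i; rewrite !ffunE at_natE.
by case: i => [[|[|[|[|[|[|//]]]]]] ?] /=; lia.
Qed.

Lemma pairing_alpha_le1 (b : Lam) (i : 'I_6) :
  pairing b b = 2 -> b != alpha i -> pairing b (alpha i) <= 1.
Proof.
move=> nb2 neq; have := pairing_sub_scaled b (alpha i) 1.
rewrite mulr1z expr1n mul1r mulr1 pairing_alpha_alpha nb2 => norm_diff.
have := pairing_ge0 (b - alpha i); rewrite norm_diff => ge0.
rewrite leNgt; apply/negP => c_gt1.
have c2 : pairing b (alpha i) = 2 by lia.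
move: norm_diff; rewrite c2 subrr => /pairing_eq0/eqP.
by rewrite subr_eq0 (negbTE neq).
Qed.

Lemma exists_simple_descent (b : Lam) :
  positive b -> pairing b b = 2 -> exists i, 0 < b i /\ 0 < pairing b (alpha i).
Proof.
move=> /forallP pos nb2.
pose descends i := (0 < b i) && (0 < pairing b (alpha i)).
have [i /andP[]|none] := pickP descends; first by exists i.
suff : pairing b b <= 0 by rewrite nb2.
rewrite pairing_expandl; apply: sumr_le0 => i _; rewrite pairingC.
move: (pos i) (none i) => /=; rewrite le_eqVlt => /orP[/eqP <-|bi_gt0].
  by rewrite mul0r.
rewrite /descends bi_gt0 /= => /negbT; rewrite -leNgt.
exact: mulr_ge0_le0 (ltW bi_gt0).
Qed.

Definition height (b : Lam) : int := \sum_i b i.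

Lemma heightB (b c : Lam) : height (b - c) = height b - height c.
Proof. by rewrite /height -sumrB; apply: eq_bigr => i _; rewrite !ffunE. Qed.

Lemma height_alpha (i : 'I_6) : height (alpha i) = 1.
Proof.
rewrite /height (bigD1 i) //= big1 => [|j /negbTE ji].
  by rewrite ffunE eqxx addr0.
by rewrite ffunE eq_sym ji.
Qed.

Lemma positive_norm2_root (b : Lam) :
  positive b -> pairing b b = 2 -> is_root b.
Proof.
have [n] : exists n : nat, height b < n%:Z by exists (absz (height b)).+1; lia.
elim: n b => [|n IH] b hb pos nb2.
  suff : 0 <= height b by rewrite leNgt hb.
  by apply: sumr_ge0 => i _; exact: (forallP pos).
have [i [bi_gt0 c_gt0]] := exists_simple_descent b pos nb2.
have [->|neq] := eqVneq b (alpha i); first exact: root_simple.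
have c1 : pairing b (alpha i) = 1 by have := pairing_alpha_le1 b i nb2 neq; lia.
have -> : b = refl i (b - alpha i).
  by rewrite reflE pairingBl c1 pairing_alpha_alpha mulrN1z opprK subrK.
apply/root_refl/IH.
- by rewrite heightB height_alpha; lia.
- apply/forallP => j; rewrite !ffunE; have := forallP pos j.
  by have [<-|] := eqVneq i j; rewrite /= ?mulr1n ?subr0; lia.
- have := pairing_sub_scaled b (alpha i) 1.
  by rewrite mulr1z c1 pairing_alpha_alpha nb2 => ->.
Qed.

Lemma F3_two : 2 = -1 :> 'F_3.
Proof. by apply/eqP. Qed.

Lemma f_coord (b : Lam) (k : 'I_5) : f b k = (d5 b k + at_nat b 5)%:~R.
Proof.
rewrite /f sum_ffunE !big_ord_recr big_ord0 /= !ffunMzE /= !(at_natE b) /d5 /=.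
case: k => [[|[|[|[|[|//]]]]] ?]; rewrite /= !ffunE /= ?F3_two;
  by rewrite ?mul0rz ?mulNrz ?intrD ?intrB; ring.
Qed.

Lemma norm2_top_coord (b : Lam) : pairing b b = 2 -> 0 < at_nat b 5 ->
  at_nat b 5 = 1 /\ forall k, d5 b k = 0 \/ d5 b k = 1.
Proof.
move=> nb2 t_gt0; have sq := pairing_sum_squares b; rewrite nb2 in sq.
have sum_ge0 : 0 <= \sum_k (2 * d5 b k - at_nat b 5) ^+ 2.
  by apply: sumr_ge0 => k _; exact: sqr_ge0.
have t1 : at_nat b 5 = 1 by rewrite expr2 in sq; nia.
rewrite t1 in sq; split=> // k.
have nonneg j : 0 <= (2 * d5 b j - 1) ^+ 2 - 1 by nia.
have sq_sum : \sum_j ((2 * d5 b j - 1) ^+ 2 - 1) = 0.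
  rewrite sumrB sumr_const card_ord; apply/eqP; rewrite subr_eq0; apply/eqP.
  by apply: (addIr (3 * 1 ^+ 2)); rewrite -sq.
have /(_ k) := psumr_eq0P (fun j _ => nonneg j) sq_sum.
by rewrite expr2; nia.
Qed.

Lemma sum_d5 (b : Lam) : \sum_k d5 b k = 2 * at_nat b 4.
Proof. by rewrite !big_ord_recr big_ord0 /= /d5 /=; ring. Qed.

(* The inverse of [d5] on vectors of even sum 2 m; m becomes the coefficient
   of a5 (see [sum_d5]) and t that of a6. *)
Definition lift_d5 (z : {ffun 'I_5 -> int}) (m t : int) : Lam :=
  let z n := at_nat z n in
  [ffun i : 'I_6 =>
     nth 0 [:: z 0; m - z 4; z 0 + z 1; z 0 + z 1 + z 2; m; t] i].

Lemma at_nat_lift (z : {ffun 'I_5 -> int}) (m t : int) (n : nat) : (n < 6)%N ->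
  at_nat (lift_d5 z m t) n
  = nth 0 [:: at_nat z 0; m - at_nat z 4; at_nat z 0 + at_nat z 1;
              at_nat z 0 + at_nat z 1 + at_nat z 2; m; t] n.
Proof. by move=> n_lt6; rewrite /at_nat ffunE inordK. Qed.

Lemma d5_lift (z : {ffun 'I_5 -> int}) (m t : int) :
  \sum_k z k = 2 * m -> d5 (lift_d5 z m t) =1 z.
Proof.
rewrite !big_ord_recr big_ord0 /= !(at_natE z) /= => zsum k.
rewrite (at_natE z) /d5 !at_nat_lift //.
by case: k => [[|[|[|[|[|//]]]]] ?] /=; lia.
Qed.

Lemma card_indicator (I : finType) (y : I -> int) :
  (forall i, y i = 0 \/ y i = 1) -> #|[set i | y i == 1]|%:Z = \sum_i y i.
Proof.
move=> y01; rewrite cardsE -sum1_card -natz natr_sum big_mkcond /=.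
by apply: eq_bigr => i _; rewrite -[i \in _]/(y i == 1); case: (y01 i) => ->.
Qed.

Lemma double_not_odd (n : nat) (c : int) : n%:Z = 2 * c -> ~~ odd n.
Proof. by move=> nE; rewrite [n](_ : _ = (`|c|%N).*2) ?odd_double //; lia. Qed.

Lemma Gamma6plus_even_sign (x : V) :
  Gamma6plus x -> (forall i, x i != 0) /\ ~~ odd #|[set i | x i == 2]|.
Proof.
case=> b [/root_norm nb2 /forallP pos b6 <-].
have t_gt0 : 0 < at_nat b 5 by rewrite -(at_natE b ord_max) lt_def b6 pos.
have [t1 z01] := norm2_top_coord b nb2 t_gt0.
have fE k : f b k = (d5 b k + 1)%:~R by rewrite f_coord t1.
split=> [k|]; first by rewrite fE; case: (z01 k) => ->.
have -> : [set k | f b k == 2] = [set k | d5 b k == 1].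
  by apply/setP => k; rewrite !inE fE; case: (z01 k) => ->.
by apply: (@double_not_odd _ (at_nat b 4)); rewrite card_indicator // sum_d5.
Qed.

Lemma even_sign_Gamma6plus (x : V) :
  (forall i, x i != 0) -> ~~ odd #|[set i | x i == 2]| -> Gamma6plus x.
Proof.
move=> nz even2.
pose z : {ffun 'I_5 -> int} := [ffun k => (x k == 2)%:Z].
have z01 k : z k = 0 \/ z k = 1.
  by rewrite ffunE; case: (x k == 2); [right|left].
pose m := (#|[set k | x k == 2]|./2)%:Z.
have zsum : \sum_k z k = 2 * m.
  have -> : 2 * m = #|[set k | x k == 2]|%:Z by have := even_halfK even2; lia.
  rewrite -card_indicator //; congr Posz; apply: eq_card => k.
  by rewrite !inE ffunE; case: (x k == 2).
pose b := lift_d5 z m 1.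
have d5b := d5_lift z m 1 zsum; have b5 : at_nat b 5 = 1 by rewrite at_nat_lift.
have pos : positive b.
  have z01n n : at_nat z n = 0 \/ at_nat z n = 1 := z01 (inord n).
  move: zsum; rewrite !big_ord_recr big_ord0 /= !(at_natE z) /= => zsum.
  apply/forallP => i; rewrite (at_natE b) at_nat_lift //.
  have := z01n 0%N; have := z01n 1%N; have := z01n 2%N.
  have := z01n 3%N; have := z01n 4%N.
  by case: i => [[|[|[|[|[|[|//]]]]]] ?] /=; lia.
have nb2 : pairing b b = 2.
  apply: (mulfI (_ : 4 != 0)) => //; rewrite pairing_sum_squares b5.
  rewrite (eq_bigr (fun _ => 1)) => [|k _]; first by rewrite sumr_const card_ord.
  by rewrite d5b; case: (z01 k) => ->.
exists b; split=> //; first exact: positive_norm2_root.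
  by rewrite (at_natE b) b5.
apply/ffunP => k; rewrite f_coord b5 d5b ffunE.
by have := nz k; case: (F3_cases (x k)) => ->.
Qed.

Theorem mainTheorem15 :
  forall x : V,
    (Gamma6plus x <-> \prod_(i < 5) x i = 1) /\
    (\prod_(i < 5) x i = 1 <->
       ((forall i, x i != 0) /\ ~~ odd #|[set i | x i == 2]|)).
Proof.
move=> x; have prod_iff := prod_F3_eq1 _ x; split=> //.
apply: (iff_trans _ (iff_sym prod_iff)); split.
  exact: Gamma6plus_even_sign.
by case; exact: even_sign_Gamma6plus.
Qed.
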